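(* Every locally stable commutative ring $R$ has stable range 2; that is, whenever $a,b,c\in R$ satisfy $aR+bR+cR=R$, there exist $y,z\in R$ such that $(a+cy)R+(b+cz)R=R$.
   Context: All rings are commutative with identity. A ring $S$ has stable range 1 if whenever $aS+bS=S$ there is $y\in S$ with $a+by$ a unit. $R$ is locally stable if whenever $a,b\in R$ with $aR+bR=R$ there is $y\in R$ such that $R/(a+by)R$ has stable range 1. *)

From mathcomp Require Import all_boot all_algebra.
Set Implicit Arguments. Unset Strict Implicit. Unset Printing Implicit Defensive.
Import GRing.Theory.
Local Open Scope ring_scope.

Definition in_pideal (R : comPzRingType) (x r : R) : Prop := exists s : R, r = x * s.

(* aR + bR = R  <->  exists s t, a s + b t = 1 *)
Definition comax2 (R : comPzRingType) (a b : R) : Prop :=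
  exists s t : R, a * s + b * t = 1.

Definition comax3 (R : comPzRingType) (a b c : R) : Prop :=
  exists s t u : R, a * s + b * t + c * u = 1.

(* Stable range 1 of the quotient R/xR, written via representatives in R:
   for classes abar = a + xR, bbar = b + xR, abar S + bbar S = S means
   a s + b t - 1 in xR for some s t; and abar + bbar ybar is a unit of R/xR
   means (a + b y) v - 1 in xR for some v. *)
Definition sr1_quot (R : comPzRingType) (x : R) : Prop :=
  forall a b : R, (exists s t : R, in_pideal x (a * s + b * t - 1)) ->
    exists y v : R, in_pideal x ((a + b * y) * v - 1).

Definition locally_stable (R : comPzRingType) : Prop :=
  forall a b : R, comax2 a b -> exists y : R, sr1_quot (a + b * y).

Definition sr2 (R : comPzRingType) : Prop :=
  forall a b c : R, comax3 a b c ->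
    exists y z : R, comax2 (a + c * y) (b + c * z).

From mathcomp Require Import all_boot all_algebra.
From mathcomp Require Import ring.
Import GRing.Theory.
Local Open Scope ring_scope.

(* Given a s + b t + c u = 1, the elements b and a s + c u are comaximal, so
   local stability yields y such that R/eR has stable range 1, where
   e = b + (a s + c u) y.  Modulo e the images of a and c are comaximal, hence
   a' = a + c y1 is a unit modulo e for some y1; in particular a' and e are
   comaximal in R.  Since e = b + c z + a' (s y) with z = u y - y1 s y, the
   element a' is also comaximal with b' = b + c z. *)

Section Comaximal.

Context {R : comPzRingType}.
Implicit Types a b c e r s t u v x y : R.

Lemma comax2_addMr {a b} r : comax2 a (b + a * r) -> comax2 a b.
Proof. by case=> s [t st1]; exists (s + r * t), t; rewrite -st1; ring. Qed.

Lemma comax2_unit_mod {x e v} : in_pideal e (x * v - 1) -> comax2 x e.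
Proof. by case=> w xv1; exists v, (- w); rewrite mulrN -xv1; ring. Qed.

Lemma comax3_comax2 {a b c s t u} :
  a * s + b * t + c * u = 1 -> comax2 b (a * s + c * u).
Proof. by move=> stu1; exists t, 1; rewrite mulr1 -stu1; ring. Qed.

Lemma comax3_comax_mod {a b c s t u} y :
    a * s + b * t + c * u = 1 ->
  exists s' u', in_pideal (b + (a * s + c * u) * y) (a * s' + c * u' - 1).
Proof.
move=> stu1; exists (s - s * y * t), (u - u * y * t), (- t).
by rewrite -stu1; ring.
Qed.

End Comaximal.

Theorem lemma3p1 (R : comPzRingType) : locally_stable R -> sr2 R.
Proof.
move=> LS a b c [s [t [u stu1]]].
have [y sr1_e] := LS _ _ (comax3_comax2 stu1).
set e := b + (a * s + c * u) * y.
have [y1 [v unit_mod_e]] := sr1_e a c (comax3_comax_mod y stu1).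
exists y1, (u * y - y1 * s * y).
apply: (comax2_addMr (s * y)).
have -> : b + c * (u * y - y1 * s * y) + (a + c * y1) * (s * y) = e.
  by rewrite /e; ring.
exact: comax2_unit_mod unit_mod_e.
Qed.
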